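(* An optimal digraph has no stable set of size at least $3$.
   Context: Digraphs are finite, loopless, with at most one edge $uv$ per ordered pair. A set $X$ of vertices is stable if $uv\notin E(G)$ for all $u,v\in X$. A digraph is $2$-free if no distinct $u,v$ have both $uv,vu$ as edges. A circular interval digraph is a digraph together with a fixed arrangement of its vertices in a circle such that for all distinct $u,v,w$ in clockwise order with $uw\in E(G)$, also $uv,vw\in E(G)$. For distinct $u,v$, $d(u,v) = 1 + |\{w: u,w,v \text{ distinct, in clockwise order}\}|$; this is the length of the ordered pair $uv$. A non-edge is an ordered pair $(u,v)$ of distinct vertices with neither $uv$ nor $vu$ an edge; its length is $d(u,v)$. $\xi(G)$ is the number of pairs $(uv,(w,x))$ with $uv\in E(G)$, $(w,x)$ a non-edge, $d(u,v)>d(w,x)$. $\tilde P_3(G)$ is the number of triples $(a,b,c)$ of distinct vertices with $ab,bc\in E(G)$ and $ac,ca\notin E(G)$. For fixed $n\ge 4$, $G$ is optimal if it is a $2$-free circular interval digraph on $n$ vertices maximizing $\tilde P_3$ among all such digraphs and, subject to this, minimizing $\xi(G)$. *)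

From mathcomp Require Import all_boot.
Set Implicit Arguments. Unset Strict Implicit. Unset Printing Implicit Defensive.

(* A digraph on n vertices together with a circular arrangement is modelled
   with vertex set 'I_n, the clockwise order being the cyclic order 0,1,...,n-1.
   The edge relation is a boolean relation e (at most one edge per ordered pair
   is automatic). *)

Definition dist (n : nat) (u v : 'I_n) : nat := (v + n - u) %% n.

Definition cw (n : nat) (u v w : 'I_n) : bool :=
  [&& u != v, v != w, u != w & dist u v < dist u w].

Definition loopless (n : nat) (e : rel 'I_n) : Prop := forall u, ~~ e u u.

Definition two_free (n : nat) (e : rel 'I_n) : Prop :=
  forall u v, u != v -> ~~ (e u v && e v u).

Definition circular_interval (n : nat) (e : rel 'I_n) : Prop :=
  loopless e /\
  forall u v w, cw u v w -> e u w -> e u v && e v w.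

Definition admissible (n : nat) (e : rel 'I_n) : Prop :=
  two_free e /\ circular_interval e.

Definition nonedge (n : nat) (e : rel 'I_n) (w x : 'I_n) : bool :=
  [&& w != x, ~~ e w x & ~~ e x w].

Definition xi (n : nat) (e : rel 'I_n) : nat :=
  #|[pred p : ('I_n * 'I_n) * ('I_n * 'I_n) |
      [&& e p.1.1 p.1.2, nonedge e p.2.1 p.2.2 &
          dist p.2.1 p.2.2 < dist p.1.1 p.1.2]]|.

Definition P3 (n : nat) (e : rel 'I_n) : nat :=
  #|[pred t : 'I_n * 'I_n * 'I_n |
      [&& t.1.1 != t.1.2, t.1.2 != t.2, t.1.1 != t.2,
          e t.1.1 t.1.2, e t.1.2 t.2, ~~ e t.1.1 t.2 & ~~ e t.2 t.1.1]]|.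

Definition optimal (n : nat) (e : rel 'I_n) : Prop :=
  admissible e /\
  (forall e' : rel 'I_n, admissible e' -> P3 e' <= P3 e) /\
  (forall e' : rel 'I_n, admissible e' -> P3 e' = P3 e -> xi e <= xi e').

Definition stable (n : nat) (e : rel 'I_n) (X : {set 'I_n}) : Prop :=
  forall u v, u \in X -> v \in X -> ~~ e u v.

(* Suppose there is a stable triple and
   choose one, x y z in clockwise order, whose first gap g = d(x,y) is shortest
   among all stable triples.  Minimality forces four fans of edges around the
   gap: x -> v -> y for every v strictly inside it, y -> w for the vertices w
   up to g steps after y, and p -> x for the vertices p less than g steps
   before x.  If the predecessor of x has an edge to x, adding the edge xy
   keeps the digraph admissible; each induced path x -> v -> y it destroys is
   traded for the new induced path x -> y -> (v shifted by g), and
   (pred x) -> x -> y is gained.  Otherwise g = 1 and x is isolated, and an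
   isolated vertex can always be exploited: join an isolated vertex to a
   non-isolated successor, or, if the digraph is edgeless, take a directed
   cycle.  Either way P3 is not maximal. *)

From mathcomp Require Import all_boot zify.
Set Implicit Arguments. Unset Strict Implicit. Unset Printing Implicit Defensive.

Section Circle.

Variable n : nat.
Implicit Types (u v o a b c : 'I_n) (k : nat).

Lemma ord_gt0 u : 0 < n.
Proof. exact: leq_ltn_trans (leq0n u) (ltn_ord u). Qed.

Definition shift u k : 'I_n := Ordinal (ltn_pmod (u + k) (ord_gt0 u)).

Definition after u : 'I_n := shift u 1.
Definition before u : 'I_n := shift u n.-1.

Lemma distP u v :
  (u <= v /\ dist u v = v - u) \/ (v < u /\ dist u v = v + n - u).
Proof.
rewrite /dist; have hu := ltn_ord u; have hv := ltn_ord v.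
case: (leqP u v) => h; [left|right]; split => //.
  have -> : v + n - u = (v - u) + n by lia.
  by rewrite modnDr modn_small //; lia.
by rewrite modn_small //; lia.
Qed.

Lemma dist_lt u v : dist u v < n.
Proof. by have := ltn_ord u; have := ltn_ord v; case: (distP u v); lia. Qed.

Lemma distxx u : dist u u = 0.
Proof. by case: (distP u u); lia. Qed.

Lemma dist_inj o : injective (dist o).
Proof.
move=> a b h; apply: val_inj => /=.
by have := ltn_ord a; have := ltn_ord b; have := ltn_ord o;
  case: (distP o a); case: (distP o b); lia.
Qed.

Lemma eq_dist o a b : (a == b) = (dist o a == dist o b).
Proof. by rewrite (inj_eq (@dist_inj o)). Qed.

Lemma dist_sub o a b : dist o a <= dist o b -> dist a b = dist o b - dist o a.
Proof.
by have := ltn_ord a; have := ltn_ord b; have := ltn_ord o;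
  case: (distP o a); case: (distP o b); case: (distP a b); lia.
Qed.

Lemma dist_wrap o a b : dist o b < dist o a -> dist a b = dist o b + n - dist o a.
Proof.
by have := ltn_ord a; have := ltn_ord b; have := ltn_ord o;
  case: (distP o a); case: (distP o b); case: (distP a b); lia.
Qed.

(* Clockwise order of a, b, c is a cyclic rotation of the increasing order of
   their positions seen from any base point o; this turns every statement about
   cw into linear arithmetic. *)
Lemma cw_dist o a b c : cw a b c =
  [|| (dist o a < dist o b) && (dist o b < dist o c),
      (dist o b < dist o c) && (dist o c < dist o a) |
      (dist o c < dist o a) && (dist o a < dist o b)].
Proof.
rewrite /cw (eq_dist o a b) (eq_dist o b c) (eq_dist o a c).
have := dist_lt o a; have := dist_lt o b; have := dist_lt o c => ha hb hc.
case: (leqP (dist o a) (dist o b)) => hab; rewrite ?(dist_sub hab) ?(dist_wrap hab);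
case: (leqP (dist o a) (dist o c)) => hac; rewrite ?(dist_sub hac) ?(dist_wrap hac);
by apply/idP/idP => ?; lia.
Qed.

Lemma dist_shift u k : k < n -> dist u (shift u k) = k.
Proof.
move=> hk; have hu := ltn_ord u.
have hs : shift u k = (if u + k < n then u + k else u + k - n) :> nat.
  rewrite /=; case: ifP => h; first by rewrite modn_small.
  have -> : u + k = (u + k - n) + n by lia.
  by rewrite modnDr modn_small; lia.
by case: (distP u (shift u k)); case: ifP hs; lia.
Qed.

Lemma shift_dist u v : shift u (dist u v) = v.
Proof. by apply: (@dist_inj u); rewrite dist_shift // dist_lt. Qed.

Lemma shift0 u : shift u 0 = u.
Proof. by apply: val_inj; rewrite /= addn0 modn_small. Qed.

Lemma shiftS u k : shift u k.+1 = after (shift u k).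
Proof. by apply: val_inj; rewrite /= modnDml addn1 addnS. Qed.

Lemma dist_after u : 1 < n -> dist u (after u) = 1.
Proof. exact: dist_shift. Qed.

Lemma dist_before u : dist u (before u) = n.-1.
Proof. by apply: dist_shift; have := ord_gt0 u; lia. Qed.

Lemma cw_rot a b c : cw a b c -> cw b c a.
Proof. by rewrite !(cw_dist a) distxx; lia. Qed.

Lemma cw_total a b c : a != b -> b != c -> c != a -> cw a b c || cw a c b.
Proof.
rewrite !(cw_dist a) !(eq_dist a) distxx.
by have := dist_lt a b; have := dist_lt a c; lia.
Qed.

End Circle.

Lemma card_lt_inj (T : finType) (A B : {pred T}) (f : T -> T) t0 :
  {in A &, injective f} -> (forall t, t \in A -> f t \in B) -> t0 \in B ->
  (forall t, t \in A -> f t != t0) -> #|A| < #|B|.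
Proof.
move=> f_inj fAB t0B f_t0; rewrite -(card_in_imset f_inj).
apply: proper_card; apply/properP; split.
  by apply/subsetP => _ /imsetP[t tA ->]; exact: fAB.
exists t0 => //; apply/imsetP => -[t tA ht].
by move: (f_t0 t tA); rewrite -ht eqxx.
Qed.

Definition path3 n (e : rel 'I_n) (t : 'I_n * 'I_n * 'I_n) : bool :=
  [&& t.1.1 != t.1.2, t.1.2 != t.2, t.1.1 != t.2,
      e t.1.1 t.1.2, e t.1.2 t.2, ~~ e t.1.1 t.2 & ~~ e t.2 t.1.1].

Lemma P3E n (e : rel 'I_n) : P3 e = #|[pred t | path3 e t]|.
Proof. by []. Qed.

Definition add_edge n (e : rel 'I_n) (a b : 'I_n) : rel 'I_n :=
  [rel u v | e u v || (u == a) && (v == b)].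

Lemma path3_add_edge n (e : rel 'I_n) (a b : 'I_n) (t : 'I_n * 'I_n * 'I_n) :
  path3 e t -> ~~ ((t.1.1 == a) && (t.2 == b)) -> ~~ ((t.1.1 == b) && (t.2 == a)) ->
  path3 (add_edge e a b) t.
Proof.
case: t => [[p q] r]; rewrite /path3 /=.
case/and5P => -> -> -> epq /and3P[eqr npr nrp] pa; rewrite andbC => pb.
by rewrite /add_edge /= epq eqr !negb_or npr nrp pa pb.
Qed.

Definition improvable n (e : rel 'I_n) : Prop :=
  exists e' : rel 'I_n, admissible e' /\ P3 e < P3 e'.

Section AdmissibleDigraph.

Variables (n : nat) (e : rel 'I_n).
Hypothesis adm : admissible e.

Lemma adm_loopless u : ~~ e u u.
Proof. by case: adm => _ []. Qed.

Lemma adm_interval u v w : cw u v w -> e u w -> e u v && e v w.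
Proof. by case: adm => _ [_]; apply. Qed.

Lemma nonedge_left a b c : cw a b c -> ~~ e a b -> ~~ e a c.
Proof. by move=> h; apply: contra => /(adm_interval h)/andP[]. Qed.

Lemma nonedge_right a b c : cw a b c -> ~~ e b c -> ~~ e a c.
Proof. by move=> h; apply: contra => /(adm_interval h)/andP[]. Qed.

Lemma add_edge_admissible (a b : 'I_n) : a != b -> ~~ e b a ->
  (forall v, cw a v b -> e a v && e v b) -> admissible (add_edge e a b).
Proof.
move=> ab nba fan; case: adm => two_fr [loopl interv]; split; [|split].
- move=> u v uv; rewrite /add_edge /=.
  apply/negP => /andP[/orP[euv | /andP[/eqP ua /eqP vb]]].
    case/orP => [evu | /andP[/eqP va /eqP ub]].
      by move: (two_fr u v uv); rewrite euv evu.
    by move: euv; rewrite va ub (negbTE nba).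
  by subst u v; rewrite /add_edge /= (negbTE nba) (eq_sym b) (negbTE ab).
- move=> u; rewrite /add_edge /= negb_or loopl /=.
  by apply/andP => -[/eqP-> /eqP ba]; rewrite ba eqxx in ab.
- move=> u v w h; rewrite /add_edge /= => /orP[euw | /andP[/eqP ua /eqP wb]].
    by have /andP[-> ->] := interv _ _ _ h euw.
  by subst u w; have /andP[-> ->] := fan _ h.
Qed.

End AdmissibleDigraph.

Definition isolated n (e : rel 'I_n) (v : 'I_n) : bool := [forall u, ~~ e v u && ~~ e u v].

Lemma isolatedP n (e : rel 'I_n) v : isolated e v -> forall u, e v u = false /\ e u v = false.
Proof. by move=> /forallP iso u; have /andP[/negbTE -> /negbTE ->] := iso u. Qed.

Definition directed_cycle n : rel 'I_n := [rel u v | v == after u].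

Lemma directed_cycle_admissible n : 2 < n -> admissible (@directed_cycle n).
Proof.
move=> n3; rewrite /directed_cycle; split; [|split].
- move=> u v uv; apply/negP => /andP[/eqP vu /eqP uv'] /=.
  have d1 : dist u v = 1 by rewrite vu dist_after //; lia.
  have d2 : dist v u = 1 by rewrite uv' dist_after //; lia.
  by have := @dist_wrap _ v u v; rewrite distxx d1 d2; lia.
- by move=> u /=; rewrite (eq_dist u) dist_after ?distxx //; lia.
- move=> u v w /= + /eqP wu; rewrite wu (cw_dist u) distxx dist_after; lia.
Qed.

Section IsolatedVertex.

Variables (n : nat) (e : rel 'I_n).
Hypotheses (n4 : 4 <= n) (adm : admissible e).

(* If all vertices are isolated then P3 e = 0, while the directed cycle has
   induced paths. *)
Lemma edgeless_improvable : (forall u, isolated e u) -> improvable e.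
Proof.
move=> iso; exists (@directed_cycle n); split; first by apply: directed_cycle_admissible; lia.
have no_path t : t \in [pred t | path3 e t] -> False.
  by case: t => [[a b] c]; rewrite inE /path3 /= (isolatedP (iso a) b).1 => /and5P[].
pose v : 'I_n := Ordinal (leq_trans (isT : 0 < 4) n4).
rewrite !P3E; apply: (@card_lt_inj _ _ _ id (shift v 0, shift v 1, shift v 2)).
- by move=> ? ? /no_path.
- by move=> ? /no_path.
- rewrite inE /path3 /directed_cycle /= -!shiftS !eqxx !(eq_dist v) !dist_shift //; lia.
- by move=> ? /no_path.
Qed.

(* The successor of an isolated vertex u, if not isolated, has an out-neighbour:
   an edge c -> after u would pass over u. *)
Lemma after_isolated_out u : isolated e u -> ~~ isolated e (after u) ->
  exists c, e (after u) c.
Proof.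
move=> iso /forallPn[c]; rewrite negb_and !negbK => /orP[hc|hc]; first by exists c.
have u1 : dist u (after u) = 1 by rewrite dist_after //; lia.
have cu : c != u by apply: contraTneq hc => ->; rewrite (isolatedP iso _).1.
have ca : c != after u.
  by apply: contraTneq hc => ->; rewrite (negbTE (adm_loopless adm _)).
have : cw c u (after u).
  by move: cu ca; rewrite (cw_dist u) !(eq_dist u c) distxx u1; have := dist_lt u c; lia.
by move/(adm_interval adm)/(_ hc); rewrite (isolatedP iso c).2.
Qed.

(* Joining an isolated vertex u to a non-isolated successor w creates the
   induced path u -> w -> c and destroys none. *)
Lemma isolated_after_improvable u : isolated e u -> ~~ isolated e (after u) -> improvable e.
Proof.
move=> iso niso; have [c ewc] := after_isolated_out iso niso.
set w := after u in niso ewc *.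
have uw1 : dist u w = 1 by rewrite dist_after //; lia.
have uw : u != w by rewrite (eq_dist u) distxx uw1.
have wc : w != c by apply: contraTneq ewc => <-; exact: adm_loopless.
have uc : u != c by apply: contraTneq ewc => <-; rewrite (isolatedP iso w).2.
exists (add_edge e u w); split.
  apply: add_edge_admissible => //; first by rewrite (isolatedP iso w).2.
  by move=> v; rewrite (cw_dist u) distxx uw1; lia.
rewrite !P3E; apply: (@card_lt_inj _ _ _ id (u, w, c)) => //.
- move=> [[a b] d]; rewrite !inE => pth; apply: path3_add_edge => //=.
    apply/andP => -[/eqP au _]; move: pth.
    by rewrite /path3 /= au (isolatedP iso b).1 => /and5P[].
  apply/andP => -[_ /eqP du]; move: pth.
  by rewrite /path3 /= du (isolatedP iso b).2 => /and5P[] _ _ _ _ /and3P[].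
- rewrite inE /path3 /add_edge /= uw wc uc ewc !eqxx /=.
  by rewrite (isolatedP iso c).1 (isolatedP iso c).2 orbT (eq_sym c) (negbTE wc) (negbTE uw) andbF.
- move=> [[a b] d]; rewrite inE /path3 /= => /and5P[_ _ _ eab _].
  by apply/eqP => -[au bw _]; move: eab; rewrite au bw (isolatedP iso w).1.
Qed.

(* A digraph with an isolated vertex is never P3-maximal: either the walk
   around the circle reaches an isolated vertex with non-isolated successor, or
   the digraph is edgeless. *)
Lemma isolated_improvable v : isolated e v -> improvable e.
Proof.
move=> iso; case: (boolP [exists u, isolated e u && ~~ isolated e (after u)]).
  by case/existsP => u /andP[isou nisou]; exact: isolated_after_improvable isou nisou.
move/existsPn => none.
apply: edgeless_improvable => u; rewrite -(shift_dist v u).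
elim: (dist v u) => [|k IH]; first by rewrite shift0.
by move: (none (shift v k)); rewrite shiftS IH /= negbK.
Qed.

End IsolatedVertex.

Definition stable_triple n (e : rel 'I_n) (x y z : 'I_n) : bool :=
  [&& cw x y z, nonedge e x y, nonedge e y z & nonedge e z x].

Lemma stable_tripleI n (e : rel 'I_n) a b c : cw a b c ->
  ~~ e a b -> ~~ e b a -> ~~ e b c -> ~~ e c b -> ~~ e c a -> ~~ e a c ->
  stable_triple e a b c.
Proof.
move=> h nab nba nbc ncb nca nac; have /and4P[ab bc ac _] := h.
by rewrite /stable_triple /nonedge h ab bc (eq_sym c) ac nab nba nbc ncb nca nac.
Qed.

Lemma stable_triple_rot n (e : rel 'I_n) x y z :
  stable_triple e x y z -> stable_triple e y z x.
Proof. by case/and4P => /cw_rot c *; apply/and4P. Qed.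

Lemma stable_set_triple n (e : rel 'I_n) (X : {set 'I_n}) a b c :
  stable e X -> a \in X -> b \in X -> c \in X -> a != b -> b != c -> c != a ->
  exists x y z, stable_triple e x y z.
Proof.
move=> st aX bX cX ab bc ca; case/orP: (cw_total ab bc ca) => h.
  by exists a, b, c; apply: stable_tripleI; rewrite // st.
by exists a, c, b; apply: stable_tripleI; rewrite // st.
Qed.

Section MinimalStableTriple.

Variables (n : nat) (e : rel 'I_n) (x y z : 'I_n).
Hypotheses (adm : admissible e) (sxyz : stable_triple e x y z).
Hypothesis min_gap : forall a b c, stable_triple e a b c -> dist x y <= dist a b.

Local Notation g := (dist x y).

Local Ltac cw_arith o := rewrite (cw_dist o) ?distxx; lia.

Lemma triple_cw : cw x y z.
Proof. by case/and4P: sxyz. Qed.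

Lemma triple_nonadjacent :
  [/\ ~~ e x y /\ ~~ e y x, ~~ e y z /\ ~~ e z y & ~~ e z x /\ ~~ e x z].
Proof. by case/and4P: sxyz => _ /and3P[_ -> ->] /and3P[_ -> ->] /and3P[_ -> ->]. Qed.

(* Minimality applied to the rotations y z x and z x y: the other two gaps of
   the triple are at least g. *)
Lemma gap_bounds : 0 < g /\ g + g <= dist x z /\ dist x z + g <= n.
Proof.
have := triple_cw; rewrite (cw_dist x) distxx => cxyz.
have gxz : g < dist x z by lia.
have := min_gap (stable_triple_rot sxyz); rewrite (dist_sub (ltnW gxz)).
have := min_gap (stable_triple_rot (stable_triple_rot sxyz)).
rewrite (@dist_wrap _ x z x) distxx; have := dist_lt x z; lia.
Qed.

(* The four fans around the short gap: a missing edge in any of them would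
   yield a stable triple with a shorter first gap. *)
Lemma fan_out_x v : 0 < dist x v < g -> e x v.
Proof.
move=> hv; apply/negPn/negP => nxv.
have [[nxy nyx] [nyz nzy] [nzx nxz]] := triple_nonadjacent.
have [g0 [g2 gn]] := gap_bounds; have := dist_lt x z => zn.
suff /min_gap : stable_triple e x v z by lia.
apply: stable_tripleI => //.
- by cw_arith x.
- by apply: (nonedge_right adm (b := y)) => //; cw_arith x.
- by apply: (nonedge_right adm (b := y)) => //; cw_arith x.
- by apply: (nonedge_left adm (b := x)) => //; cw_arith x.
Qed.

Lemma fan_in_y v : 0 < dist x v < g -> e v y.
Proof.
move=> hv; apply/negPn/negP => nvy.
have [[nxy nyx] [nyz nzy] [nzx nxz]] := triple_nonadjacent.
have [g0 [g2 gn]] := gap_bounds; have := dist_lt x z => zn.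
suff /min_gap : stable_triple e v y z by rewrite (@dist_sub _ x v y); lia.
apply: stable_tripleI => //.
- by cw_arith x.
- by apply: (nonedge_left adm (b := z)) => //; cw_arith x.
- by apply: (nonedge_left adm (b := x)) => //; cw_arith x.
- by apply: (nonedge_right adm (b := y)) => //; cw_arith x.
Qed.

Lemma fan_out_y w : g < dist x w < g + g -> e y w.
Proof.
move=> hw; apply/negPn/negP => nyw.
have [[nxy nyx] [nyz nzy] [nzx nxz]] := triple_nonadjacent.
have [g0 [g2 gn]] := gap_bounds; have := dist_lt x z => zn.
suff /min_gap : stable_triple e y w x by rewrite (@dist_sub _ x y w); lia.
apply: stable_tripleI => //.
- by cw_arith x.
- by apply: (nonedge_right adm (b := x)) => //; cw_arith x.
- by apply: (nonedge_right adm (b := z)) => //; cw_arith x.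
- by apply: (nonedge_left adm (b := y)) => //; cw_arith x.
Qed.

Lemma fan_in_x p : n - g < dist x p -> e p x.
Proof.
move=> hp; apply/negPn/negP => npx.
have [[nxy nyx] [nyz nzy] [nzx nxz]] := triple_nonadjacent.
have [g0 [g2 gn]] := gap_bounds; have := dist_lt x p => pn.
suff /min_gap : stable_triple e p x y by rewrite (@dist_wrap _ x p x) distxx; lia.
apply: stable_tripleI => //.
- by cw_arith x.
- by apply: (nonedge_left adm (b := y)) => //; cw_arith x.
- by apply: (nonedge_left adm (b := z)) => //; cw_arith x.
- by apply: (nonedge_right adm (b := x)) => //; cw_arith x.
Qed.

Lemma before_isolated : ~~ e (before x) x -> isolated e x.
Proof.
move=> npx; have [[nxy _] _ _] := triple_nonadjacent.
have [g0 [g2 gn]] := gap_bounds; have xp := dist_before x; have zn := dist_lt x z.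
have g1 : g = 1.
  by apply/eqP; apply: contraNT npx => g1; apply: fan_in_x; rewrite xp; lia.
apply/forallP => u; apply/andP; split.
- have [-> | ux] := eqVneq u x; first exact: adm_loopless.
  have [-> | uy] := eqVneq u y; first exact: nxy.
  apply: (nonedge_left adm (b := y)) => //.
  by move: ux uy; rewrite (cw_dist x) !(eq_dist x) distxx g1; have := dist_lt x u; lia.
- have [-> | ux] := eqVneq u x; first exact: adm_loopless.
  have [-> | up] := eqVneq u (before x); first exact: npx.
  apply: (nonedge_right adm (b := before x)) => //.
  by move: ux up; rewrite (cw_dist x) !(eq_dist x) distxx xp; have := dist_lt x u; lia.
Qed.

(* Adding the edge xy keeps the digraph admissible, thanks to the fans
   x -> v -> y over the short gap. *)
Lemma add_xy_admissible : admissible (add_edge e x y).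
Proof.
have [[_ nyx] _ _] := triple_nonadjacent; have [g0 _] := gap_bounds.
apply: add_edge_admissible => //; first by rewrite (eq_dist x) distxx; lia.
move=> v; rewrite (cw_dist x) distxx => hv.
by rewrite fan_out_x ?fan_in_y //; lia.
Qed.

(* The induced paths destroyed by adding xy are exactly the x -> b -> y with b
   inside the short gap; none runs from y to x. *)
Lemma path3_x_y b : path3 e (x, b, y) -> 0 < dist x b < g.
Proof.
case/and5P => /= xb yb _ exb _; have [[nxy _] _ _] := triple_nonadjacent.
have b0 : 0 < dist x b by move: xb; rewrite (eq_dist x) distxx; lia.
have [g0 _] := gap_bounds; rewrite b0 ltnNge; apply/negP => gb.
have /(adm_interval adm)/(_ exb)/andP[exy _] : cw x y b.
  by move: xb yb; rewrite (cw_dist x) !(eq_dist x) distxx; have := dist_lt x b; lia.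
by rewrite exy in nxy.
Qed.

Lemma no_path3_y_x b : ~~ path3 e (y, b, x).
Proof.
apply/negP => /and5P[/= _ bx _ eyb /and3P[ebx _ _]].
move: bx; rewrite (eq_dist x) distxx => bx.
have [[nxy nyx] [nyz nzy] [nzx nxz]] := triple_nonadjacent.
have [g0 [g2 gn]] := gap_bounds; have bn := dist_lt x b; have zn := dist_lt x z.
have [bz | bz] := eqVneq b z; first by move: nyz; rewrite -bz eyb.
have [hb | hb] := ltnP (dist x b) (dist x z).
  have /(adm_interval adm)/(_ ebx)/andP[_] : cw b z x by cw_arith x.
  by rewrite (negbTE nzx).
have /(adm_interval adm)/(_ eyb)/andP[] : cw y z b.
  by move: bz; rewrite (cw_dist x) (eq_dist x); lia.
by rewrite (negbTE nyz).
Qed.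

(* Each destroyed path x -> b -> y is replaced by the new induced path
   x -> y -> w, with w one gap-length beyond b. *)
Lemma shifted_path3 b : 0 < dist x b < g ->
  path3 (add_edge e x y) (x, y, shift x (g + dist x b)).
Proof.
move=> hb; have [[nxy nyx] [nyz nzy] [nzx nxz]] := triple_nonadjacent.
have [g0 [g2 gn]] := gap_bounds; have zn := dist_lt x z.
set w := shift x _; have xw : dist x w = g + dist x b by rewrite dist_shift; lia.
rewrite /path3 /add_edge /= !eqxx /= orbT fan_out_y ?xw; last by lia.
rewrite !(eq_dist x) xw distxx (negbTE (nonedge_left adm _ nxy)); last first.
  by rewrite (cw_dist x) xw distxx; lia.
rewrite (negbTE (nonedge_right adm (b := z) _ nzx)); last first.
  by rewrite (cw_dist x) xw distxx; lia.
by apply/and4P; split; lia.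
Qed.

Lemma before_path3 : e (before x) x -> path3 (add_edge e x y) (before x, x, y).
Proof.
move=> epx; have [[nxy nyx] [nyz nzy] [nzx nxz]] := triple_nonadjacent.
have [g0 [g2 gn]] := gap_bounds; have xp := dist_before x.
have zp : dist x z <= n.-1 by have := dist_lt x z; lia.
rewrite /path3 /add_edge /= epx !eqxx orbT !(eq_dist x) xp distxx.
rewrite (negbTE (nonedge_right adm (b := x) _ nxy)); last first.
  by rewrite (cw_dist x) xp distxx; lia.
have nyp : ~~ e y (before x).
  have [<- | pz] := eqVneq z (before x); first exact: nyz.
  apply: (nonedge_left adm (b := z)) => //.
  by move: pz; rewrite (cw_dist x) (eq_dist x) xp; lia.
by rewrite (negbTE nyp) /=; lia.
Qed.

(* Adding xy strictly increases the number of induced paths: destroyed paths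
   are traded injectively for new ones, and before x -> x -> y is gained. *)
Lemma add_xy_P3_lt : e (before x) x -> P3 e < P3 (add_edge e x y).
Proof.
move=> epx; have [[nxy _] _ _] := triple_nonadjacent.
pose f (t : 'I_n * 'I_n * 'I_n) :=
  if (t.1.1 == x) && (t.2 == y) then (x, y, shift x (g + dist x t.1.2)) else t.
rewrite !P3E; apply: (@card_lt_inj _ _ _ f (before x, x, y)).
- move=> [[a1 b1] c1] [[a2 b2] c2]; rewrite !inE /f /=.
  case: ifP => [/andP[/eqP-> /eqP->] | _] p1; case: ifP => [/andP[/eqP-> /eqP->] | _] p2.
  + move/(congr1 (fun t : 'I_n * 'I_n * 'I_n => dist x t.2)); rewrite /= !dist_shift; last 2 first.
    * by have := path3_x_y p2; have := gap_bounds; have := dist_lt x z; lia.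
    * by have := path3_x_y p1; have := gap_bounds; have := dist_lt x z; lia.
    by move=> /addnI/dist_inj ->.
  + by move=> [ha hb _]; move: p2; rewrite -ha -hb /path3 /= (negbTE nxy) => /and5P[].
  + by move=> [ha hb _]; move: p1; rewrite ha hb /path3 /= (negbTE nxy) => /and5P[].
  + by [].
- move=> [[a b] c]; rewrite !inE /f /=; case: ifP => [/andP[/eqP-> /eqP->] | hac] pth.
    exact/shifted_path3/path3_x_y.
  apply: path3_add_edge => //=; first by rewrite hac.
  by apply: contraNN (no_path3_y_x b) => /andP[/eqP ay /eqP cx]; rewrite -ay -cx.
- by rewrite inE; exact: before_path3.
- move=> [[a b] c]; rewrite inE /f /=; case: ifP => _ pth.
    by apply/eqP => -[px _ _]; have := dist_before x; rewrite -px distxx; have := gap_bounds; lia.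
  by apply: contraTneq pth => -[-> -> ->]; rewrite /path3 /= (negbTE nxy) /= !andbF.
Qed.

End MinimalStableTriple.

(* A digraph with a stable triple is not P3-maximal: take a stable triple whose
   first gap is shortest; either adding that gap as an edge gains induced
   paths, or its first vertex is isolated. *)
Lemma stable_triple_improvable n (e : rel 'I_n) x y z : 4 <= n -> admissible e ->
  stable_triple e x y z -> improvable e.
Proof.
move=> n4 adm sxyz.
pose has_gap k :=
  [exists a, exists b, exists c, stable_triple e a b c && (dist a b == k)].
have gapP a b c : stable_triple e a b c -> has_gap (dist a b).
  by move=> s; apply/existsP; exists a; apply/existsP; exists b; apply/existsP; exists c;
     rewrite s eqxx.
have /ex_minnP[_ /existsP[a /existsP[b /existsP[c /andP[sabc /eqP <-]]]] min_k] :=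
  ex_intro has_gap _ (gapP _ _ _ sxyz).
have min_gap a' b' c' : stable_triple e a' b' c' -> dist a b <= dist a' b'.
  by move/gapP/min_k.
have [epa | npa] := boolP (e (before a) a).
  exists (add_edge e a b).
  by split; [exact: add_xy_admissible adm sabc min_gap | exact: add_xy_P3_lt adm sabc min_gap epa].
exact: isolated_improvable n4 adm _ (before_isolated adm sabc min_gap npa).
Qed.

Theorem mainTheorem10 (n : nat) (e : rel 'I_n) :
  4 <= n -> optimal e ->
  forall X : {set 'I_n}, stable e X -> #|X| < 3.
Proof.
move=> n4 [adm [P3_max _]] X stX; rewrite ltnNge; apply/negP.
case/card_gt2P => a [b [c [[aX bX cX] [ab bc ca]]]].
have [x [y [z sxyz]]] := stable_set_triple stX aX bX cX ab bc ca.
have [e' [adm' lt_P3]] := stable_triple_improvable n4 adm sxyz.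
by move: (P3_max e' adm'); rewrite leqNgt lt_P3.
Qed.
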